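(* In the HBHC protocol, revocation is effective during complete network partitions: a verifier that has cached the parent's heartbeat public key $hpk_p$ decides acceptance of a child's authentication proof using only the proof, the cached $hpk_p$, a locally generated challenge, and its local clock, with no network communication; and after the parent is revoked at true time $t_r$, every such verifier rejects all proofs of the parent's children at all times $t \ge t_r + W_{\max} + \Delta_h + \epsilon$, regardless of network connectivity.
   Context: HBHC setting. A parent agent $A_p$ holds a heartbeat signing key pair $(hsk_p, hpk_p)$ (ECDSA); a child $A_c$ holds an identity key pair $(sk_c, pk_c)$ and a credential $cred_c$ containing $pk_c$, an identifier $id_c$, and $hb\_binding_c = H(hpk_p \| id_c)$ with $H$ = SHA-256. While not revoked, at time $t$ the parent emits every $\Delta_h$ seconds a heartbeat $(epoch, commitment, \sigma_h, hpk_p)$ with $epoch = \lfloor t/\Delta_h\rfloor$, $commitment = H(hpk_p\|epoch)$, $\sigma_h = \mathrm{Sign}(hsk_p, commitment)$. The child answers a verifier challenge $c$ with $(cred_c, epoch, \sigma_h, \sigma_c)$, $\sigma_c = \mathrm{Sign}(sk_c, c\|epoch\|\sigma_h)$. A verifier with cached $hpk_p$ and local time $t$ accepts iff $\lfloor t/\Delta_h\rfloor - epoch \le W_{\max}/\Delta_h$, $\sigma_h$ verifies under $hpk_p$ on $H(hpk_p\|epoch)$, $cred_c.hb\_binding = H(hpk_p\|cred_c.id)$, and $\sigma_c$ verifies under $cred_c.pk_c$ on $c\|epoch\|\sigma_h$. Revocation at $t_r$: the parent generates no heartbeats after $t_r$. Verifier clocks differ from true time by at most $\epsilon$. The adversary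 controls the network (may partition it arbitrarily and indefinitely) but cannot forge ECDSA signatures or extract $hsk_p$. The verifier is assumed to have cached $hpk_p$ before any partition occurs. *)

From Stdlib Require Import Reals ZArith.
Open Scope R_scope.
Set Implicit Arguments.

(** Epoch of a time: floor(t / Delta_h), as an integer.
    Int_part x = up x - 1 is the floor of x in Stdlib. *)
Definition epoch_of (Delta_h t : R) : Z := Int_part (t / Delta_h).

(** Abstract cryptographic primitives of the HBHC setting.
    - PK / Sig : ECDSA public keys and signatures (for both hpk_p and pk_c),
    - Id       : agent identifiers,
    - Chal     : verifier challenges,
    - Digest   : SHA-256 outputs.
    H_hb pk e  = H(pk || e)   (heartbeat commitment),
    H_bind pk i = H(pk || i)  (heartbeat binding in credentials),
    verify_digest pk m s : ECDSA verification of s on digest m under pk,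
    verify_child pk (c, e, sh) s : ECDSA verification of s on c || e || sh. *)
Record Primitives := {
  PK : Type;
  Sig : Type;
  Id : Type;
  Chal : Type;
  Digest : Type;
  H_hb : PK -> Z -> Digest;
  H_bind : PK -> Id -> Digest;
  verify_digest : PK -> Digest -> Sig -> bool;
  verify_child : PK -> Chal -> Z -> Sig -> Sig -> bool
}.

Record Cred (P : Primitives) := {
  cred_pk : PK P;
  cred_id : Id P;
  cred_hb_binding : Digest P
}.

Record AuthProof (P : Primitives) := {
  pr_cred : Cred P;
  pr_epoch : Z;
  pr_sigma_h : Sig P;
  pr_sigma_c : Sig P
}.

(** Its only inputs are the proof,
    the cached heartbeat public key hpk, the locally generated challenge c
    and the local clock reading tloc (plus the protocol constants
    Delta_h, W_max): there is no network input. *)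
Definition accepts (P : Primitives) (Delta_h W_max : R)
    (prf : AuthProof P) (hpk : PK P) (c : Chal P) (tloc : R) : Prop :=
  IZR (epoch_of Delta_h tloc - pr_epoch prf) <= W_max / Delta_h /\
  verify_digest P hpk (H_hb P hpk (pr_epoch prf)) (pr_sigma_h prf) = true /\
  cred_hb_binding (pr_cred prf) = H_bind P hpk (cred_id (pr_cred prf)) /\
  verify_child P (cred_pk (pr_cred prf)) c (pr_epoch prf) (pr_sigma_h prf)
               (pr_sigma_c prf) = true.

From Stdlib Require Import Reals ZArith Lra.
Open Scope R_scope.

(* A heartbeat signature that verifies under hpk_p is, by unforgeability, one
   the parent produced, so by collision resistance its epoch is the epoch of
   some emission time t' <= t_r.  A verifier whose clock reads at least
   t - eps >= t_r + W_max + Delta_h sees an epoch exceeding that one by more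
   than W_max / Delta_h (floors lose less than 1), so the freshness check
   fails.  No network input is involved since [accepts] has none. *)

Lemma Int_part_sub_gt (x y : R) : x - y - 1 < IZR (Int_part x - Int_part y).
Proof.
  rewrite minus_IZR.
  destruct (base_Int_part x), (base_Int_part y).
  lra.
Qed.

Lemma epoch_of_sub_gt (Delta t t' : R) :
  0 < Delta -> (t - t') / Delta - 1 < IZR (epoch_of Delta t - epoch_of Delta t').
Proof.
  intros HDelta.
  replace ((t - t') / Delta) with (t / Delta - t' / Delta) by (field; lra).
  apply Int_part_sub_gt.
Qed.

Lemma epoch_of_sub_gt_window {Delta W t' t : R} :
  0 < Delta -> t' + W + Delta <= t ->
  W / Delta < IZR (epoch_of Delta t - epoch_of Delta t').
Proof.
  intros HDelta Hlate.
  apply Rle_lt_trans with ((t - t') / Delta - 1); [|now apply epoch_of_sub_gt].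
  replace (W / Delta) with ((t' + W + Delta - t') / Delta - 1) by (field; lra).
  apply Rplus_le_compat_r; unfold Rdiv.
  apply Rmult_le_compat_r; [apply Rlt_le, Rinv_0_lt_compat|]; lra.
Qed.

Lemma Rabs_sub_le_lower {x y e : R} : Rabs (x - y) <= e -> y - e <= x.
Proof.
  intros Hxy.
  rewrite Rabs_minus_sym in Hxy.
  pose proof (Rle_abs (y - x)).
  lra.
Qed.

Section Heartbeats.

Context {P : Primitives} {Delta_h t_r : R} {hpk_p : PK P}.
Context {parent_signed : Digest P -> Prop}.

Hypothesis Hunforge : forall (m : Digest P) (s : Sig P),
  verify_digest P hpk_p m s = true -> parent_signed m.
Hypothesis Hparent : forall m : Digest P, parent_signed m ->
  exists t' : R, t' <= t_r /\ m = H_hb P hpk_p (epoch_of Delta_h t').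
Hypothesis Hcr : forall e1 e2 : Z, H_hb P hpk_p e1 = H_hb P hpk_p e2 -> e1 = e2.

Lemma verified_heartbeat_epoch {e : Z} {s : Sig P} :
  verify_digest P hpk_p (H_hb P hpk_p e) s = true ->
  exists t' : R, t' <= t_r /\ e = epoch_of Delta_h t'.
Proof.
  intros Hverif.
  apply Hunforge, Hparent in Hverif as [t' [Ht' Hcommit]].
  exists t'; split; [exact Ht' | now apply Hcr].
Qed.

End Heartbeats.

Theorem theorem2
  (P : Primitives) (Delta_h W_max eps t_r : R)
  (hpk_p : PK P)
  (* digests ever signed with hsk_p *)
  (parent_signed : Digest P -> Prop)
  (HDelta : 0 < Delta_h) (Heps : 0 <= eps)
  (* EUF security of ECDSA: without hsk_p the adversary cannot make a
     signature that verifies under hpk_p on a digest the parent never signed *)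
  (Hunforge : forall (m : Digest P) (s : Sig P),
      verify_digest P hpk_p m s = true -> parent_signed m)
  (* the parent signs with hsk_p only heartbeat commitments
     H(hpk_p || floor(t'/Delta_h)) at emission times t', and emits
     no heartbeat after the revocation time t_r *)
  (Hparent : forall m : Digest P, parent_signed m ->
      exists t' : R, t' <= t_r /\ m = H_hb P hpk_p (epoch_of Delta_h t'))
  (* collision resistance of SHA-256 on heartbeat commitments *)
  (Hcr : forall e1 e2 : Z, H_hb P hpk_p e1 = H_hb P hpk_p e2 -> e1 = e2) :
  forall (t tloc : R) (c : Chal P) (prf : AuthProof P),
    Rabs (tloc - t) <= eps ->
    t_r + W_max + Delta_h + eps <= t ->
    ~ accepts Delta_h W_max prf hpk_p c tloc.
Proof.
  intros t tloc c prf Hclock Hlate [Hfresh [Hsig _]].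
  destruct (verified_heartbeat_epoch Hunforge Hparent Hcr Hsig)
    as [t' [Ht' Hepoch]].
  rewrite Hepoch in Hfresh.
  assert (Hlocal : t' + W_max + Delta_h <= tloc).
  { pose proof (Rabs_sub_le_lower Hclock); lra. }
  exact (Rlt_not_le _ _ (epoch_of_sub_gt_window HDelta Hlocal) Hfresh).
Qed.
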